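(* Let $T$ be a balanced tree. If $T$ has two leaves $l_1,l_2$ with $\mathrm{dist}(l_1,l_2)=4$, then $T$ is mixed.
   Context: A leaf is a vertex of degree 1; the height of a vertex is its minimum distance to a leaf; a tree is balanced if no two adjacent vertices have the same height. With $N(D)=\bigcup_{v\in D}\{u:uv\in E\}$, a TD-set is $D$ with $N(D)=V$, minimal if no proper subset is a TD-set. $T$ is unmixed if all minimal TD-sets have the same size, and mixed otherwise. *)

From mathcomp Require Import all_boot.
Set Implicit Arguments. Unset Strict Implicit. Unset Printing Implicit Defensive.

Section Graphs.
Variables (T : finType) (e : rel T).

Definition simple_graph : Prop := symmetric e /\ irreflexive e.

Definition has_cycle : Prop :=
  exists c : seq T, [/\ 3 <= size c, uniq c & cycle e c].

Definition connected_graph : Prop := forall x y : T, connect e x y.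

Definition is_tree : Prop := [/\ simple_graph, connected_graph & ~ has_cycle].

Definition nbhd (v : T) : {set T} := [set u | e v u].
Definition leaf (v : T) : bool := #|nbhd v| == 1.

Definition is_dist (x y : T) (d : nat) : Prop :=
  (exists p : seq T, [/\ path e x p, last x p = y & size p = d]) /\
  (forall p : seq T, path e x p -> last x p = y -> d <= size p).

Definition is_height (v : T) (h : nat) : Prop :=
  (exists l, leaf l /\ is_dist v l h) /\
  (forall l d, leaf l -> is_dist v l d -> h <= d).

Definition balanced : Prop :=
  forall u v h, e u v -> is_height u h -> ~ is_height v h.

Definition NS (D : {set T}) : {set T} := \bigcup_(v in D) nbhd v.
Definition TDset (D : {set T}) : bool := NS D == [set: T].
Definition minimal_TDset (D : {set T}) : Prop :=
  TDset D /\ (forall D' : {set T}, D' \proper D -> ~ TDset D').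

Definition unmixed : Prop :=
  forall D1 D2 : {set T}, minimal_TDset D1 -> minimal_TDset D2 -> #|D1| = #|D2|.
Definition mixed : Prop := ~ unmixed.

End Graphs.

From mathcomp Require Import all_boot.

Set Implicit Arguments. Unset Strict Implicit. Unset Printing Implicit Defensive.

(* Let l1 - a - b - c - l2 be the path between the two leaves and X the set of
   neighbours of a or c other than l1 and l2.  Every vertex keeps a neighbour
   outside X: a leaf adjacent to X would give two adjacent support vertices, both
   of height 1, and a vertex with two neighbours in X would close a 4- or 6-cycle
   through a - b - c.  A minimal TD-set Q inside the complement of X must contain
   l1 and l2, the only vertices there dominating a and c; replacing both by b
   gives a smaller TD-set, hence a minimal TD-set smaller than Q. *)

Section Graph.
Variables (T : finType) (e : rel T).

Lemma leaf_nbr_uniq l x y : leaf e l -> e l x -> e l y -> x = y.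
Proof.
move=> /cards1P [z nbhdl] elx ely.
have : x \in nbhd e l by rewrite inE.
have : y \in nbhd e l by rewrite inE.
by rewrite nbhdl !inE => /eqP -> /eqP ->.
Qed.

Lemma two_nbrs_leafN x y z : e x y -> e x z -> y != z -> ~~ leaf e x.
Proof. by move=> exy exz; apply: contraNN => lx; rewrite (leaf_nbr_uniq lx exy exz). Qed.

Lemma other_nbr v u : ~~ leaf e v -> e v u -> exists2 u', e v u' & u' != u.
Proof.
move=> nlv evu; have : nbhd e v != [set u].
  by apply: contraNneq nlv; rewrite /leaf => ->; rewrite cards1.
rewrite eqEsubset sub1set inE evu andbT => /subsetPn [u'].
by rewrite !inE => evu' nu'u; exists u'.
Qed.

Lemma connected_nbr x y : connected_graph e -> x != y -> exists u, e x u.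
Proof.
move=> /(_ x y) /connectP [[|u p] /= pxp lastp]; first by rewrite lastp eqxx.
by exists u; case/andP: pxp.
Qed.

Lemma is_dist4_path x y : is_dist e x y 4 ->
  exists a b c, [/\ e x a, e a b, e b c & e c y] /\ [/\ ~~ e a c, ~~ e x c & ~~ e a y].
Proof.
case=> [[[|a [|b [|c [|d [|? ?]]]]] [//= /and5P [exa eab ebc ecd _] /= <- _]]] // dmin.
exists a, b, c; split=> //; split; apply/negP => H.
- by have := dmin [:: a; c; d]; rewrite /= exa H ecd => /(_ isT erefl).
- by have := dmin [:: c; d]; rewrite /= H ecd => /(_ isT erefl).
- by have := dmin [:: a; d]; rewrite /= exa H => /(_ isT erefl).
Qed.

Lemma is_height1_support x l : ~~ leaf e x -> leaf e l -> e x l -> is_height e x 1.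
Proof.
move=> nlx ll exl; split.
  exists l; split=> //; split; first by exists [:: l]; rewrite /= exl.
  by case=> [|y p] //= _ lastp; rewrite lastp ll in nlx.
move=> l' [|d] // ll' [[[|y p] [//= _ lastp _]] _].
by rewrite lastp ll' in nlx.
Qed.

Lemma balanced_supportN x y l l' : balanced e ->
  ~~ leaf e x -> ~~ leaf e y -> leaf e l -> leaf e l' -> e x l -> e y l' -> ~~ e x y.
Proof.
move=> bal nlx nly ll ll' exl eyl'; apply/negP => exy.
exact: bal exy (is_height1_support nlx ll exl) (is_height1_support nly ll' eyl').
Qed.

Lemma TDsetP (D : {set T}) : reflect (forall x, exists2 w, w \in D & e w x) (TDset e D).
Proof.
apply: (iffP eqP) => [DT x | Dx].
  have : x \in NS e D by rewrite DT inE.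
  by case/bigcupP=> w wD; rewrite inE; exists w.
apply/setP => x; rewrite inE; have [w wD ewx] := Dx x.
by apply/bigcupP; exists w; rewrite ?inE.
Qed.

Lemma TDset_forced (Q : {set T}) l z :
  TDset e Q -> {in Q, forall w, e w z -> w = l} -> l \in Q.
Proof. by move=> /TDsetP /(_ z) [w wQ ewz] onlyl; rewrite -(onlyl w wQ ewz). Qed.

Lemma minimal_TDset_sub (S : {set T}) :
  TDset e S -> exists2 M, minimal_TDset e M & M \subset S.
Proof.
move=> ST.
have exS : exists n, [exists D : {set T}, [&& D \subset S, TDset e D & #|D| == n]].
  by exists #|S|; apply/existsP; exists S; rewrite subxx ST eqxx.
case: (ex_minnP exS) => n /existsP [M /and3P [MS MT /eqP <-]] Mmin.
exists M => //; split=> // D' D'M D'T.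
have : #|M| <= #|D'|.
  apply: Mmin; apply/existsP; exists D'.
  by rewrite (subset_trans (proper_sub D'M) MS) D'T eqxx.
by rewrite leqNgt (proper_card D'M).
Qed.

Lemma mixed_of_TDset_lt (P Q : {set T}) :
  minimal_TDset e Q -> TDset e P -> #|P| < #|Q| -> mixed e.
Proof.
move=> Qmin PT ltPQ unm; have [M Mmin MP] := minimal_TDset_sub PT.
by have := subset_leq_card MP; rewrite -(unm _ _ Qmin Mmin) leqNgt ltPQ.
Qed.

Lemma TDset_swap_leaves (Q : {set T}) l1 l2 a b c : TDset e Q -> leaf e l1 -> leaf e l2 ->
  e l1 a -> e l2 c -> e b a -> e b c -> TDset e (b |: (Q :\ l1 :\ l2)).
Proof.
move=> /TDsetP QT ll1 ll2 e1a e2c eba ebc; apply/TDsetP => x.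
have [w wQ ewx] := QT x.
have [wl1 | nwl1] := eqVneq w l1.
  by exists b; rewrite ?setU11 // -(leaf_nbr_uniq ll1 e1a (_ : e l1 x)) // -wl1.
have [wl2 | nwl2] := eqVneq w l2.
  by exists b; rewrite ?setU11 // -(leaf_nbr_uniq ll2 e2c (_ : e l2 x)) // -wl2.
by exists w; rewrite // !inE nwl1 nwl2 wQ orbT.
Qed.

End Graph.

Lemma card_setU1D2_lt (T : finType) (A : {set T}) x y z :
  x \in A -> y \in A -> x != y -> #|z |: (A :\ x :\ y)| < #|A|.
Proof.
move=> xA yA nxy; rewrite (cardsD1 x A) (cardsD1 y (A :\ x)) cardsU1 xA.
by rewrite !inE (eq_sym y x) nxy yA add1n ltnS leq_add2r leq_b1.
Qed.

Section Forest.
Variables (T : finType) (e : rel T).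
Hypotheses (esym : symmetric e) (eirr : irreflexive e) (nocyc : ~ has_cycle e).

Lemma adj_neq x y : e x y -> x != y.
Proof. by apply: contraTneq => ->; rewrite eirr. Qed.

Lemma acyclic_common_nbrs z v x y :
  z != v -> e v x -> e v y -> e z x -> e z y -> x = y.
Proof.
move=> nzv evx evy ezx ezy; case: (eqVneq x y) => // nxy.
case: nocyc; exists [:: z; x; v; y]; split=> //.
  rewrite /= !inE !negb_or nzv nxy (adj_neq ezx) (adj_neq ezy) (adj_neq evy).
  by rewrite (eq_sym x v) (adj_neq evx).
by rewrite /= ezx (esym x v) evx evy (esym y z) ezy.
Qed.

Lemma acyclic_no_hexagon a b c v x y : e a b -> e b c -> ~~ e a c ->
  v != a -> v != b -> v != c -> e v x -> e v y -> e a x -> e c y ->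
  ~~ e c x -> ~~ e a y -> False.
Proof.
move=> eab ebc eac nva nvb nvc evx evy eax ecy ncx nay.
have nac : a != c by apply: contraNneq ncx => <-.
have nay' : a != y by apply: contraNneq eac => ->; rewrite esym.
have nxc : x != c by apply: contraNneq eac => <-.
have nxy : x != y by apply: contraNneq ncx => ->.
have nxb : x != b by apply: contraNneq ncx => ->; rewrite esym.
have nyb : y != b by apply: contraNneq nay => ->.
case: nocyc; exists [:: a; x; v; y; c; b]; split=> //.
  rewrite /= !inE !negb_or nac nay' nxc nxy nxb nyb (eq_sym a v) nva nvb nvc.
  rewrite (adj_neq eax) (adj_neq eab) (adj_neq evy) (eq_sym x v) (adj_neq evx).
  by rewrite (eq_sym y c) (adj_neq ecy) (eq_sym c b) (adj_neq ebc).
by rewrite /= eax (esym x v) evx evy (esym y c) ecy (esym c b) ebc (esym b a) eab.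
Qed.

Lemma acyclic_nbrs_near_path_uniq a b c v x y : e a b -> e b c -> ~~ e a c ->
  v != a -> v != b -> v != c -> e v x -> e v y ->
  e a x || e c x -> e a y || e c y -> x = y.
Proof.
move=> eab ebc eac nva nvb nvc evx evy exac eyac.
have common z : z != v -> e z x -> e z y -> x = y.
  by move=> nzv; apply: acyclic_common_nbrs nzv evx evy.
have [eax | nax] := boolP (e a x).
  have [eay | nay] := boolP (e a y); first by apply: (common a); rewrite // eq_sym.
  have ecy : e c y by rewrite (negbTE nay) in eyac.
  have [ecx | ncx] := boolP (e c x); first by apply: (common c); rewrite // eq_sym.
  by case: (acyclic_no_hexagon eab ebc eac nva nvb nvc evx evy eax ecy ncx nay).
have ecx : e c x by rewrite (negbTE nax) in exac.
have [ecy | ncy] := boolP (e c y); first by apply: (common c); rewrite // eq_sym.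
have eay : e a y by rewrite (negbTE ncy) orbF in eyac.
by case: (acyclic_no_hexagon eab ebc eac nva nvb nvc evy evx eay ecx ncy nax).
Qed.

Section LeavesAtDistanceFour.
Hypotheses (econn : connected_graph e) (bal : balanced e).
Variables (l1 a b c l2 : T).
Hypotheses (ll1 : leaf e l1) (ll2 : leaf e l2).
Hypotheses (e1a : e l1 a) (eab : e a b) (ebc : e b c) (ec2 : e c l2).
Hypotheses (nac : ~~ e a c) (n1c : ~~ e l1 c) (na2 : ~~ e a l2).

Definition inner_nbhd : {set T} := (nbhd e a :\ l1) :|: (nbhd e c :\ l2).

Lemma mem_inner w : (w \in inner_nbhd) = ((w != l1) && e a w) || ((w != l2) && e c w).
Proof. by rewrite !inE. Qed.

Lemma inner_nbr w : w \in inner_nbhd -> e a w || e c w.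
Proof. by rewrite mem_inner => /orP [/andP [_ ->] | /andP [_ ->]]; rewrite ?orbT. Qed.

Lemma leaf_nbr_notin_inner v u : leaf e v -> e v u -> u \notin inner_nbhd.
Proof.
move=> lv evu; apply/negP.
have supported z l : leaf e l -> e z l -> e z u -> u != l -> False.
  move=> ll ezl ezu nul.
  have nlz : ~~ leaf e z by apply: two_nbrs_leafN ezl ezu _; rewrite eq_sym.
  have nvz : v != z by apply: contraNneq nlz => <-.
  have nlu : ~~ leaf e u by apply: two_nbrs_leafN (_ : e u v) (_ : e u z) nvz; rewrite esym.
  by move: ezu; apply/negP; apply: balanced_supportN bal nlz nlu ll lv ezl _; rewrite esym.
rewrite mem_inner => /orP [/andP [nul1 eau] | /andP [nul2 ecu]].
  by apply: supported ll1 _ eau nul1; rewrite esym.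
exact: supported ll2 ec2 ecu nul2.
Qed.

Lemma TDset_setC_inner : TDset e (~: inner_nbhd).
Proof.
apply/TDsetP => v.
have [-> | nva] := eqVneq v a.
  by exists l1; rewrite // inE mem_inner eqxx (esym c l1) (negbTE n1c) andbF.
have [-> | nvc] := eqVneq v c.
  by exists l2; rewrite 1?esym // inE mem_inner eqxx (negbTE na2) andbF.
have [-> | nvb] := eqVneq v b.
  by exists a; rewrite // inE mem_inner eirr (esym c a) (negbTE nac) !andbF.
have [u evu] := connected_nbr econn nva.
have [uX | uX] := boolP (u \in inner_nbhd); last by exists u; [rewrite inE | rewrite esym].
have [lv | nlv] := boolP (leaf e v).
  by rewrite (negbTE (leaf_nbr_notin_inner lv evu)) in uX.
have [u' evu' nu'u] := other_nbr nlv evu.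
exists u'; last by rewrite esym.
rewrite inE; apply: contra nu'u => u'X; apply/eqP.
apply: acyclic_nbrs_near_path_uniq eab ebc nac nva nvb nvc evu' evu _ _; exact: inner_nbr.
Qed.

Lemma mixed_of_leaves_at_distance4 : mixed e.
Proof.
have [Q Qmin QX] := minimal_TDset_sub TDset_setC_inner.
have QT := Qmin.1.
have Q_outer w : w \in Q -> w \notin inner_nbhd by move=> /(subsetP QX); rewrite inE.
have l1Q : l1 \in Q.
  apply: (TDset_forced (z := a) QT) => w /Q_outer.
  by rewrite mem_inner negb_or (esym a w) => /andP [+ _] ewa; rewrite ewa andbT negbK => /eqP.
have l2Q : l2 \in Q.
  apply: (TDset_forced (z := c) QT) => w /Q_outer.
  by rewrite mem_inner negb_or (esym c w) => /andP [_ +] ewc; rewrite ewc andbT negbK => /eqP.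
have n12 : l1 != l2 by apply: contraNneq n1c => ->; rewrite esym.
have e2c : e l2 c by rewrite esym.
have eba : e b a by rewrite esym.
apply: mixed_of_TDset_lt Qmin (TDset_swap_leaves QT ll1 ll2 e1a e2c eba ebc) _.
exact: card_setU1D2_lt l1Q l2Q n12.
Qed.

End LeavesAtDistanceFour.
End Forest.

Theorem theorem3p29 (T : finType) (e : rel T) :
  is_tree e -> balanced e ->
  forall l1 l2 : T, leaf e l1 -> leaf e l2 -> is_dist e l1 l2 4 ->
  mixed e.
Proof.
case=> [[esym eirr] econn nocyc] bal l1 l2 ll1 ll2.
case/is_dist4_path=> [a [b [c [[e1a eab ebc ec2] [nac n1c na2]]]]].
exact: mixed_of_leaves_at_distance4 e1a eab ebc ec2 nac n1c na2.
Qed.
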